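(* In the setting below, the quasi-cyclic code $C$ is Euclidean LCD if and only if all of the following hold: (I) $g(x)$ is self-reciprocal; (II) $l(x)$ is self-reciprocal; (III) $\gcd(t_{22}(x),g_{12}(x))=1$; (IV) $\gcd\big(r_{22}(x),\ g_{11}(x)\bar g_{11}(x)+g_{12}(x)\bar g_{12}(x)\big)=1$.
   Context: Let $q$ be a prime power, $F=\mathbb{F}_q$, $m\ge1$ with $\gcd(q,m)=1$, and $R=F[x]/\langle x^m-1\rangle$; elements of $R$ are represented by polynomials of degree $<m$ and identified with their coefficient vectors in $F^m$. A quasi-cyclic code of length $2m$ and index $2$ is an $R$-submodule $C\subseteq R^2$. The Euclidean inner product of $(a_1,a_2),(b_1,b_2)\in R^2$ is the sum of the standard dot products of the coefficient vectors of $a_1,b_1$ and of $a_2,b_2$; $C^{\perp_e}$ is the dual with respect to it, and $C$ is Euclidean LCD if $C\cap C^{\perp_e}=\{0\}$. For a nonzero polynomial $f$ of degree $k$, its reciprocal is $f^*(x)=x^kf(x^{-1})$; $f$ is self-reciprocal if $f^*=\alpha f$ for some $\alpha\in F$. For a polynomial $f$ of degree at most $m$, its transpose is $\bar f(x)=x^m f(x^{-1})$. Suppose $C$ is generated as an $R$-module by $(g_{11}(x),g_{12}(x))$ and $(0,g_{22}(x))$, where $g_{11},g_{12},g_{22}\in F[x]$ satisfy: $g_{11}\mid x^m-1$, $g_{22}\mid x^m-1$, $\deg g_{12}<\deg g_{22}$, and $g_{11}g_{22}\mid (x^m-1)g_{12}$. Define $g=\gcd(g_{11},g_{22})$, $l=(x^m-1)/\mathrm{lcm}(g_{11},g_{22})$,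 $g_{11}=g\,g_{11}'$, $g_{22}=g\,g_{22}'$, $r_{11}=\gcd(g_{11}',g_{11}'^* )$, $t_{11}=g_{11}'/r_{11}$, $r_{22}=\gcd(g_{22}',g_{22}'^* )$, $t_{22}=g_{22}'/r_{22}$. *)

From HB Require Import structures.
From mathcomp Require Import all_boot all_order all_algebra.
Set Implicit Arguments. Unset Strict Implicit. Unset Printing Implicit Defensive.
Import GRing.Theory.
Local Open Scope ring_scope.

Section QC.
Variable F : fieldType.

(* reciprocal f^*(x) = x^(deg f) f(1/x) *)
Definition recip (f : {poly F}) : {poly F} :=
  \poly_(i < size f) f`_(size f - 1 - i).

Definition self_recip (f : {poly F}) : Prop := exists alpha : F, recip f = alpha *: f.

(* transpose  bar f(x) = x^m f(1/x), for deg f <= m *)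
Definition transp (m : nat) (f : {poly F}) : {poly F} :=
  \poly_(i < m.+1) f`_(m - i).

Definition xm1 (m : nat) : {poly F} := 'X^m - 1.

(* lcm of polynomials (up to a nonzero scalar) *)
Definition lcmp (a b : {poly F}) : {poly F} := (a * b) %/ gcdp a b.

(* elements of R = F[x]/<x^m - 1> represented by polys of degree < m *)
Definition inR (m : nat) (p : {poly F}) : bool := (size p <= m)%N.

(* the R-submodule of R^2 generated by (g11,g12) and (0,g22) *)
Definition in_code (m : nat) (g11 g12 g22 : {poly F}) (a : {poly F} * {poly F}) : Prop :=
  exists r1 r2 : {poly F},
    a = ((r1 * g11) %% xm1 m, (r1 * g12 + r2 * g22) %% xm1 m).

Definition eip (m : nat) (a b : {poly F} * {poly F}) : F :=
  \sum_(i < m) (a.1`_i * b.1`_i + a.2`_i * b.2`_i).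

Definition in_dual (m : nat) (g11 g12 g22 : {poly F}) (b : {poly F} * {poly F}) : Prop :=
  [/\ inR m b.1, inR m b.2 & forall c, in_code m g11 g12 g22 c -> eip m c b = 0].

Definition euclid_LCD (m : nat) (g11 g12 g22 : {poly F}) : Prop :=
  forall a, in_code m g11 g12 g22 a -> in_dual m g11 g12 g22 a -> a = (0, 0).

End QC.

(* Write N = x^m - 1 and let sigma be the involution p(x) |-> p(x^-1) of
   R = F[x]/(N), realised by p |-> p(x^(m-1)).  The Euclidean inner product of
   a and b is the constant term of a1 sigma(b1) + a2 sigma(b2) in R, so a pair a
   lies in the dual of C iff N divides sigma(g11) a1 + sigma(g12) a2 and
   sigma(g22) a2; the LCD property thus becomes a divisibility statement about
   the multipliers (r1, r2) of a codeword.  Since gcd(q, m) = 1, N is separable,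
   so divisibility by N can be checked at each irreducible factor f of N, where it
   only depends on which of g11, g12, g22, their images under sigma and
   g11 sigma(g11) + g12 sigma(g12) are divisible by f.  The map
   f |-> f^* = gcd(N, sigma f) permutes the irreducible factors of N and swaps the
   two halves of this divisibility pattern; conditions (I)-(IV) say exactly that
   neither f nor f^* carries an obstruction, which is a finite Boolean check. *)

From mathcomp Require Import all_boot all_algebra fingroup cyclic.
From mathcomp Require Import separable.
From Stdlib Require Import Classical.
From mathcomp Require Import zify ring.
Import GRing.Theory FinRing.Theory.
Local Open Scope ring_scope.
Set Implicit Arguments. Unset Strict Implicit. Unset Printing Implicit Defensive.

Section IrreducibleFactors.
Variable F : fieldType.
Implicit Types p q f u v : {poly F}.

Lemma irredp_dvdpM f u v :
  irreducible_poly f -> f %| u * v = (f %| u) || (f %| v).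
Proof.
move=> irf; apply/idP/orP => [fuv|[/dvdp_mulr-> | /dvdp_mull->]] //.
have [fu|nfu] := boolP (f %| u); [by left | right].
by rewrite -(@Gauss_dvdpr _ v u f) // irreducible_poly_coprime.
Qed.

Lemma irredp_ndvdp1 f : irreducible_poly f -> ~~ (f %| 1).
Proof. by case; rewrite dvdp1; case: (size f) => [|[|]]. Qed.

Lemma irredp_factor p : (1 < size p)%N -> exists2 f, irreducible_poly f & f %| p.
Proof.
elim: {p}_.+1 {-2}p (ltnSn (size p)) => // n IH p lt_pn p_gt1.
have [[q /andP[q_gt1 lt_qp] qp]|no_q] :=
  classic (exists2 q : {poly F}, (1 < size q < size p)%N & q %| p).
  have [f irf fq] := IH q (leq_trans lt_qp lt_pn) q_gt1.
  by exists f => //; apply: dvdp_trans qp.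
have p0 : p != 0 by rewrite -size_poly_gt0 ltnW.
exists p => //; split=> // q q_neq1 qp.
have q0 : q != 0 by apply: contraNneq p0 => q0; move: qp; rewrite q0 dvd0p.
rewrite -dvdp_size_eqp // eqn_leq dvdp_leq //= leqNgt; apply/negP => lt_qp.
apply: no_q; exists q => //; rewrite lt_qp andbT ltn_neqAle eq_sym q_neq1.
by rewrite size_poly_gt0.
Qed.

Lemma prime_irredp p : (1 < size p)%N ->
  (forall u v, p %| u * v -> (p %| u) || (p %| v)) -> irreducible_poly p.
Proof.
move=> p_gt1 p_prime; split=> // q q_neq1 qp.
have p0 : p != 0 by rewrite -size_poly_gt0 ltnW.
have q0 : q != 0 by apply: contraNneq p0 => q0; move: qp; rewrite q0 dvd0p.
have Dp : p = (p %/ q) * q by rewrite divpK.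
have w0 : p %/ q != 0 by apply: contraNneq p0 => w0; rewrite Dp w0 mul0r.
have /orP[pw|pq] : (p %| p %/ q) || (p %| q) by apply: p_prime; rewrite -Dp.
  move: pw (size_poly_gt0 q) => /(dvdp_leq w0); rewrite {1}Dp size_mul // q0.
  lia.
by rewrite /eqp qp pq.
Qed.

Lemma coprimep_irredP p q : p != 0 ->
  coprimep p q <-> forall f, irreducible_poly f -> f %| p -> ~~ (f %| q).
Proof.
move=> p0; rewrite coprimep_def; split=> [/eqP gcd1 f irf fp|no_common].
  apply: contraNN (irredp_ndvdp1 irf) => fq.
  have /eqp_dvdr <- : gcdp p q %= 1 by rewrite -size_poly_eq1 gcd1.
  by rewrite dvdp_gcd fp.
apply: contraT => gcd_neq1.
have gcd_gt1 : (1 < size (gcdp p q))%N.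
  by move: gcd_neq1; rewrite ltn_neqAle eq_sym size_poly_gt0 gcdp_eq0 negb_and p0 => ->.
have [f irf fg] := irredp_factor gcd_gt1.
by have := no_common f irf (dvdp_trans fg (dvdp_gcdl _ _)); rewrite (dvdp_trans fg) ?dvdp_gcdr.
Qed.

End IrreducibleFactors.

Section SquareFreeModulus.
Variables (F : fieldType) (N : {poly F}).
Hypothesis sepN : separable_poly N.
Implicit Types f X Y : {poly F}.

Lemma separable_irredp_sq f : irreducible_poly f -> ~~ (f * f %| N).
Proof.
by case=> f_gt1 _; rewrite -expr2 separable_nosquare // neq_ltn f_gt1 orbT.
Qed.

Lemma separable_dvdp X Y : X %| N ->
  (forall f, irreducible_poly f -> f %| X -> f %| Y) -> X %| Y.
Proof.
move=> XN XY; have sepX := dvdp_separable XN sepN.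
have X0 := separable_poly_neq0 sepX.
set d := gcdp X Y; set e := X %/ d.
have eX : X = e * d by rewrite divpK // dvdp_gcdl.
have e0 : e != 0 by apply: contraNneq X0 => e0; rewrite eX e0 mul0r.
have coprime_ed : coprimep e d by apply: separable_coprime sepX _; rewrite -eX.
have /(eqp_mulr d) : e %= 1.
  rewrite -size_poly_eq1; apply: contraT => e_neq1.
  have [|f irf fe] := @irredp_factor _ e.
    by rewrite ltn_neqAle eq_sym e_neq1 size_poly_gt0.
  have fX : f %| X by rewrite eX dvdp_mulr.
  have := (coprimep_irredP _ e0).1 coprime_ed f irf fe.
  by rewrite dvdp_gcd fX XY.
by rewrite mul1r -eX => /eqp_dvdl ->; apply: dvdp_gcdr.
Qed.

Lemma separable_dvdpP P :
  N %| P <-> forall f, irreducible_poly f -> f %| N -> f %| P.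
Proof.
split=> [NP f _ fN|NP]; first exact: dvdp_trans NP.
by apply: separable_dvdp => // f irf fN; apply: NP.
Qed.

End SquareFreeModulus.

Section Congruence.
Variables (F : fieldType) (N : {poly F}).
Implicit Types p q r f : {poly F}.

Definition eqmodp p q := N %| p - q.

Lemma eqmodpxx p : eqmodp p p.
Proof. by rewrite /eqmodp subrr dvdp0. Qed.

Lemma eqmodp_sym p q : eqmodp p q -> eqmodp q p.
Proof. by rewrite /eqmodp -opprB dvdpNr. Qed.

Lemma eqmodp_trans q p r : eqmodp p q -> eqmodp q r -> eqmodp p r.
Proof. by rewrite /eqmodp => pq qr; rewrite -(subrK q p) -addrA dvdp_add. Qed.

Lemma eqmodpD p p' q q' : eqmodp p p' -> eqmodp q q' -> eqmodp (p + q) (p' + q').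
Proof. by rewrite /eqmodp => pp' qq'; rewrite opprD addrACA dvdp_add. Qed.

Lemma eqmodpM p p' q q' : eqmodp p p' -> eqmodp q q' -> eqmodp (p * q) (p' * q').
Proof.
rewrite /eqmodp => pp' qq'.
have -> : p * q - p' * q' = (p - p') * q + p' * (q - q') by ring.
by apply: dvdp_add; [apply: dvdp_mulr | apply: dvdp_mull].
Qed.

Lemma eqmodp_modp p : eqmodp (p %% N) p.
Proof.
by rewrite /eqmodp {2}(divp_eq p N) opprD addrCA subrr addr0 dvdpNr dvdp_mull.
Qed.

Lemma eqmodp0 p : eqmodp p 0 = (N %| p).
Proof. by rewrite /eqmodp subr0. Qed.

Lemma eqmodp_dvdp f p q : f %| N -> eqmodp p q -> (f %| p) = (f %| q).
Proof. by move=> fN /(dvdp_trans fN) fpq; rewrite -[p](subrK q) dvdp_addr. Qed.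

Lemma dvdp_mul_cofactor f X : N != 0 -> f %| N -> (N %| (N %/ f) * X) = (f %| X).
Proof.
move=> N0 fN; have cf0 : N %/ f != 0.
  by apply: contraNneq N0 => cf0; rewrite -(divpK fN) cf0 mul0r.
by rewrite -{1}(divpK fN) dvdp_mul2l.
Qed.

End Congruence.

Lemma dvdp_comp_polyB (F : fieldType) (p q1 q2 : {poly F}) :
  q1 - q2 %| (p \Po q1) - (p \Po q2).
Proof.
rewrite !comp_polyE -sumrB; apply: (big_ind (fun x => q1 - q2 %| x)) => //.
  exact: dvdp_add.
by move=> i _; rewrite -scalerBr subrXX scalerAr dvdp_mulr.
Qed.

Lemma recip_neq0 (F : fieldType) (p : {poly F}) : p != 0 -> recip p != 0.
Proof.
move=> p0; apply/eqP => /(congr1 (fun q : {poly F} => q`_0)).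
rewrite /recip coef_poly coef0 size_poly_gt0 p0 subn0 subn1 -lead_coefE.
by apply/eqP; rewrite lead_coef_eq0.
Qed.


Lemma separable_Xn_sub_1 (F : fieldType) (m : nat) :
  (m%:R : F) != 0 -> separable_poly ('X^m - 1 : {poly F}).
Proof.
move=> m0; rewrite separable_poly.unlock; apply/Bezout_coprimepP.
exists (-1, (m%:R)^-1 *: 'X); rewrite /= derivB derivXn derivC subr0.
have m_gt0 : (0 < m)%N by case: m m0 => //; rewrite eqxx.
suff -> : -1 * ('X^m - 1) + m%:R^-1 *: 'X * ('X^(m.-1) *+ m) = 1 :> {poly F} by rewrite eqpxx.
rewrite mulrnAr -scalerAl -exprS prednK // -scaler_nat scalerA.
by rewrite divff // scale1r mulN1r opprB subrK.
Qed.

Section CyclicCode.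
Variables (F : fieldType) (m : nat).
Implicit Types p q r f u v X Y : {poly F}.
Local Notation N := (xm1 F m).
(* [xinv p] represents p(x^-1) in F[x]/(x^m - 1). *)
Local Notation xinv p := (p \Po 'X^(m.-1)).

Section Duality.
Hypothesis m_gt0 : (0 < m)%N.

Lemma size_xm1 : size N = m.+1.
Proof. by rewrite /xm1 size_Xn_sub_1. Qed.

Lemma xm1_neq0 : N != 0.
Proof. by rewrite -size_poly_eq0 size_xm1. Qed.

Lemma size_modp_xm1 p : (size (p %% N)%R <= m)%N.
Proof. by rewrite -ltnS -size_xm1 ltn_modp xm1_neq0. Qed.

Lemma size_dvdp_xm1 p : p %| N -> (size p <= m.+1)%N.
Proof. by move=> pN; rewrite -size_xm1 dvdp_leq ?xm1_neq0. Qed.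

Lemma dvdp_xm1_neq0 p : p %| N -> p != 0.
Proof. by apply: contraTneq => ->; rewrite dvd0p xm1_neq0. Qed.

Lemma xm1_dvdp_Xmk k : N %| 'X^(m * k) - 1.
Proof. by rewrite exprM -(expr1n _ k) subrXX dvdp_mulr. Qed.

Lemma xm1_dvdp_xinv p : N %| p -> N %| xinv p.
Proof.
move=> /dvdpP[q ->]; rewrite comp_polyM dvdp_mull //.
by rewrite /xm1 comp_polyB comp_polyC comp_Xn_poly -exprM mulnC xm1_dvdp_Xmk.
Qed.

Lemma xinvK p : eqmodp N (xinv (xinv p)) p.
Proof.
rewrite /eqmodp -comp_polyA comp_Xn_poly -exprM -{2}(comp_polyXr p).
apply: dvdp_trans (dvdp_comp_polyB _ _ _).
have [m1|m_gt1] : m = 1%N \/ (1 < m)%N by lia.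
  by rewrite m1 /xm1 expr0 expr1 -[1 - _]opprB dvdpNr.
have -> : (m.-1 * m.-1 = m * (m - 2) + 1)%N by nia.
rewrite exprD expr1 -[X in _ - X]mul1r -mulrBl.
by rewrite dvdp_mulr // xm1_dvdp_Xmk.
Qed.

Lemma dvdp_xinv p : (N %| xinv p) = (N %| p).
Proof.
apply/idP/idP; last exact: xm1_dvdp_xinv.
by move/xm1_dvdp_xinv; rewrite -!eqmodp0 => /(eqmodp_trans (eqmodp_sym (xinvK p))).
Qed.

Lemma eqmodp_Xn_xinv i : (i <= m)%N -> eqmodp N 'X^(m - i) (('X^(m.-1)) ^+ i).
Proof.
case: i => [|i] le_im; first by rewrite subn0 expr0 /eqmodp dvdpp.
rewrite /eqmodp -exprM.
have -> : (m.-1 * i.+1 = m * i + (m - i.+1))%N by nia.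
rewrite exprD -[X in X - _]mul1r -mulrBl -opprB mulNr dvdpNr.
by rewrite dvdp_mulr // xm1_dvdp_Xmk.
Qed.

Lemma transp_eqmodp p : (size p <= m.+1)%N -> eqmodp N (transp m p) (xinv p).
Proof.
move=> sp; have -> : transp m p = \sum_(i < m.+1) p`_i *: 'X^(m - i).
  rewrite /transp poly_def (reindex_inj rev_ord_inj) /=.
  by apply: eq_bigr => i _; rewrite subSS subKn // -ltnS.
have -> : xinv p = \sum_(i < m.+1) p`_i *: ('X^(m.-1)) ^+ i.
  rewrite comp_polyE (big_ord_widen _ (fun i => p`_i *: 'X^(m.-1) ^+ i) sp) big_mkcond.
  apply: eq_bigr => i _; case: ifP => // /negbT; rewrite -leqNgt => le_pi.
  by rewrite nth_default // scale0r.
rewrite /eqmodp -sumrB; apply: (big_ind (fun x => N %| x)) => //; first exact: dvdp_add.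
by move=> i _; rewrite -scalerBr -mul_polyC dvdp_mull //; apply: eqmodp_Xn_xinv; rewrite -ltnS.
Qed.

Lemma transp_recip p : (size p <= m.+1)%N -> transp m p = 'X^(m.+1 - size p) * recip p.
Proof.
move=> sp; apply/polyP => i; rewrite coefXnM /transp /recip !coef_poly.
set s := size p in sp *.
case: (ltnP i m.+1) => lt_im; case: (ltnP i (m.+1 - s)) => lt_is.
- by rewrite nth_default //; apply: (_ : (s <= m - i)%N); lia.
- by rewrite ifT; [congr nth | ]; lia.
- lia.
- by rewrite ifF //; lia.
Qed.

Definition cterm p := (p %% N)`_0.

Lemma cterm_eqmodp p q : eqmodp N p q -> cterm p = cterm q.
Proof.
move=> /modp_eq0P pq; apply/eqP; rewrite -subr_eq0 -coefB -modpN -modpD.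
by rewrite pq coef0.
Qed.

Lemma ctermD p q : cterm (p + q) = cterm p + cterm q.
Proof. by rewrite /cterm modpD coefD. Qed.

Lemma cterm_small p : (size p <= m + m)%N -> cterm p = p`_0 + p`_m.
Proof.
move=> sp; rewrite /cterm.
have Dp : p = drop_poly m p * N + (take_poly m p + drop_poly m p).
  by rewrite /xm1 mulrBr mulr1 (addrC (take_poly m p)) addrA subrK addrC poly_take_drop.
rewrite {1}Dp modp_addl_mul_small.
  by rewrite coefD coef_take_poly m_gt0 coef_drop_poly add0n.
rewrite size_xm1 ltnS; apply: (leq_trans (size_polyD _ _)).
by rewrite geq_max size_take_poly size_drop_poly; lia.
Qed.

Lemma cterm_XnM p k : (size p <= m)%N -> (k < m)%N -> cterm ('X^(m - k) * p) = p`_k.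
Proof.
move=> sp lt_km; rewrite cterm_small.
  rewrite !coefXnM ifT; last lia.
  by rewrite ltnNge leq_subr /= add0r subKn // ltnW.
have [->|p0] := eqVneq p 0; first by rewrite mulr0 size_poly0.
rewrite size_mul ?expf_neq0 ?polyX_eq0 // size_polyXn.
by move: sp; set s := size p; lia.
Qed.

Lemma dot_cterm p q : (size p <= m)%N -> (size q <= m)%N ->
  \sum_(i < m) p`_i * q`_i = cterm (p * transp m q).
Proof.
move=> sp sq; rewrite cterm_small; last first.
  apply: (leq_trans (size_polyMleq _ _)).
  by have := size_poly m.+1 (fun i => q`_(m - i)); rewrite /transp; lia.
rewrite !coefM big_ord1 /transp coef_poly ltnS leq0n subn0 (nth_default _ sq) mulr0 add0r.
rewrite big_ord_recr /= (nth_default _ sp) mul0r addr0.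
by apply: eq_bigr => i _; rewrite coef_poly ltnS leq_subr subKn // ltnW.
Qed.

Lemma dvdp_cterm p : (forall r, cterm (r * p) = 0) -> N %| p.
Proof.
move=> ct0; apply/modp_eq0P/polyP => k; rewrite coef0.
have [lt_km|le_mk] := ltnP k m; last first.
  by rewrite nth_default // (leq_trans (size_modp_xm1 p) le_mk).
rewrite -cterm_XnM ?size_modp_xm1 // -(ct0 ('X^(m - k))).
by apply: cterm_eqmodp; apply: eqmodpM; [apply: eqmodpxx | apply: eqmodp_modp].
Qed.

Variables g11 g12 g22 : {poly F}.

Lemma eip_codeword r1 r2 (a : {poly F} * {poly F}) : inR m a.1 -> inR m a.2 ->
  eip m ((r1 * g11) %% N, (r1 * g12 + r2 * g22) %% N) a =
  cterm (r1 * (g11 * xinv a.1 + g12 * xinv a.2) + r2 * (g22 * xinv a.2)).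
Proof.
move=> a1m a2m; rewrite /eip big_split /= !dot_cterm ?size_modp_xm1 // -ctermD.
apply: cterm_eqmodp.
have transp_xinv (b : {poly F}) : (size b <= m)%N -> eqmodp N (transp m b) (xinv b).
  by move=> bm; apply: transp_eqmodp; rewrite ltnW.
have -> : r1 * (g11 * xinv a.1 + g12 * xinv a.2) + r2 * (g22 * xinv a.2) =
    r1 * g11 * xinv a.1 + (r1 * g12 + r2 * g22) * xinv a.2 by ring.
by apply: eqmodpD; apply: eqmodpM; rewrite ?eqmodp_modp ?transp_xinv.
Qed.

Lemma in_dual_modp (a : {poly F} * {poly F}) :
  in_dual m g11 g12 g22 a <->
  [/\ inR m a.1, inR m a.2, N %| xinv g11 * a.1 + xinv g12 * a.2 & N %| xinv g22 * a.2].
Proof.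
have dvdp_xinv_dual u v :
    (N %| u * xinv a.1 + v * xinv a.2) = (N %| xinv u * a.1 + xinv v * a.2).
  rewrite -dvdp_xinv comp_polyD !comp_polyM; apply: eqmodp_dvdp; first exact: dvdpp.
  by apply: eqmodpD; apply: eqmodpM; rewrite ?eqmodpxx ?xinvK.
have dvdp_xinv_dual2 : (N %| g22 * xinv a.2) = (N %| xinv g22 * a.2).
  by have := dvdp_xinv_dual 0 g22; rewrite !mul0r !add0r comp_poly0 mul0r add0r.
split=> [[a1m a2m orth]|[a1m a2m dual1 dual2]]; split=> //.
- rewrite -dvdp_xinv_dual; apply: dvdp_cterm => r.
  have := orth ((r * g11) %% N, (r * g12 + 0 * g22) %% N).
  by rewrite eip_codeword // !mul0r !addr0; apply; exists r, 0; rewrite mul0r addr0.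
- rewrite -dvdp_xinv_dual2; apply: dvdp_cterm => r.
  have := orth ((0 * g11) %% N, (0 * g12 + r * g22) %% N).
  by rewrite eip_codeword // !mul0r !add0r; apply; exists 0, r; rewrite !mul0r !add0r.
- move=> c [r1 [r2 ->]]; rewrite eip_codeword // -(cterm_eqmodp (_ : eqmodp N 0 _)).
    by rewrite /cterm mod0p coef0.
  rewrite /eqmodp sub0r dvdpNr; apply: dvdp_add; apply: dvdp_mull.
    by rewrite dvdp_xinv_dual.
  by rewrite dvdp_xinv_dual2.
Qed.

Definition LCD_modp := forall r1 r2 : {poly F},
  N %| xinv g22 * (r1 * g12 + r2 * g22) ->
  N %| xinv g11 * (r1 * g11) + xinv g12 * (r1 * g12 + r2 * g22) ->
  N %| r1 * g11 /\ N %| r1 * g12 + r2 * g22.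

Lemma euclid_LCD_modp : euclid_LCD m g11 g12 g22 <-> LCD_modp.
Proof.
have modp1 u p : (N %| u * (p %% N)) = (N %| u * p).
  by apply: eqmodp_dvdp (dvdpp N) _; apply: eqmodpM; rewrite ?eqmodpxx ?eqmodp_modp.
have modp2 u v p q : (N %| u * (p %% N) + v * (q %% N)) = (N %| u * p + v * q).
  apply: eqmodp_dvdp (dvdpp N) _.
  by apply: eqmodpD; apply: eqmodpM; rewrite ?eqmodpxx ?eqmodp_modp.
split=> [lcd r1 r2 dual2 dual1 | lcd a [r1 [r2 ->]] /in_dual_modp[_ _]].
  set c := ((r1 * g11) %% N, (r1 * g12 + r2 * g22) %% N).
  suff [/modp_eq0P ? /modp_eq0P ?] : c = (0, 0) by [].
  apply: lcd; first by exists r1, r2.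
  by apply/in_dual_modp; rewrite /inR /= !size_modp_xm1 modp1 modp2.
rewrite /= modp1 modp2 => dual1 dual2.
by have [/modp_eq0P -> /modp_eq0P ->] := lcd r1 r2 dual2 dual1.
Qed.

End Duality.

Section Localisation.
Hypothesis m_neq0 : (m%:R : F) != 0.

Let m_gt0 : (0 < m)%N.
Proof. by case: m m_neq0 => //; rewrite eqxx. Qed.

Let sepN : separable_poly N.
Proof. exact: separable_Xn_sub_1. Qed.

Let irredp_sq f : irreducible_poly f -> ~~ (f * f %| N).
Proof. exact: separable_irredp_sq. Qed.

Lemma coprimep_localP X Y : X %| N ->
  coprimep X Y <-> forall f, irreducible_poly f -> f %| N -> ~~ ((f %| X) && (f %| Y)).
Proof.
move=> XN; rewrite coprimep_irredP ?(dvdp_xm1_neq0 m_gt0 XN) //.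
split=> coXY f irf => [fN|fX]; last by have := coXY f irf (dvdp_trans fX XN); rewrite fX.
by apply/negP => /andP[fX fY]; move: (coXY f irf fX); rewrite fY.
Qed.

Lemma irredp_dvdp_cofactor f X Y : irreducible_poly f -> X * Y %| N ->
  f %| X -> (f %| Y) = false.
Proof.
move=> irf XYN fX; apply/negP => fY; have /negP := irredp_sq irf; apply.
exact: dvdp_trans (dvdp_mul fX fY) XYN.
Qed.

Section Obstruction.
Variables g11 g12 g22 : {poly F}.

(* The arguments record whether an irreducible factor f of x^m - 1 divides g11,
   g12, g22, their images under [xinv], and g11 xinv g11 + g12 xinv g12.  Each of
   the four branches, split on (f %| g22, f %| xinv g22), says exactly when some
   pair of multipliers violates [LCD_modp] at f. *)
Definition obstruction (a b d a' b' d' e : bool) :=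
  if d then (if d' then ~~ (a && b) && e else [&& b, ~~ a & a'])
  else (if d' then ~~ a || b' else ~~ a && a').

Definition obstruction_at f :=
  obstruction (f %| g11) (f %| g12) (f %| g22) (f %| xinv g11) (f %| xinv g12)
    (f %| xinv g22) (f %| g11 * xinv g11 + g12 * xinv g12).

Lemma LCD_modp_at f r1 r2 : LCD_modp g11 g12 g22 -> f %| N ->
  f %| xinv g22 * (r1 * g12 + r2 * g22) ->
  f %| xinv g11 * (r1 * g11) + xinv g12 * (r1 * g12 + r2 * g22) ->
  (f %| r1 * g11) /\ (f %| r1 * g12 + r2 * g22).
Proof.
(* Scaling the multipliers by N / f localises [LCD_modp] at f. *)
move=> lcd fN; set c := N %/ f; have := lcd (c * r1) (c * r2).
have -> : c * r1 * g12 + c * r2 * g22 = c * (r1 * g12 + r2 * g22) by ring.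
have -> : c * r1 * g11 = c * (r1 * g11) by ring.
have -> : xinv g11 * (c * (r1 * g11)) + xinv g12 * (c * (r1 * g12 + r2 * g22)) =
  c * (xinv g11 * (r1 * g11) + xinv g12 * (r1 * g12 + r2 * g22)) by ring.
by rewrite mulrCA !dvdp_mul_cofactor // xm1_neq0.
Qed.

Lemma LCD_modp_no_obstruction : LCD_modp g11 g12 g22 ->
  forall f, irreducible_poly f -> f %| N -> ~~ obstruction_at f.
Proof.
move=> lcd f irf fN; have at_f r1 r2 := @LCD_modp_at f r1 r2 lcd fN.
rewrite /obstruction_at /obstruction.
have [d|nd] := boolP (f %| g22); have [d'|nd'] := boolP (f %| xinv g22) => /=.
- apply/negP => /andP[/negP nab e]; apply: nab; have [] := at_f 1 0.
  + exact: dvdp_mulr.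
  + by have -> : xinv g11 * (1 * g11) + xinv g12 * (1 * g12 + 0 * g22) =
      g11 * xinv g11 + g12 * xinv g12 by ring.
  + by rewrite !mul1r mul0r addr0 => -> ->.
- apply/negP => /and3P[b na a']; have [] := at_f 1 0.
  + by rewrite mul1r mul0r addr0 dvdp_mull.
  + by rewrite !mul1r mul0r addr0; apply: dvdp_add; [apply: dvdp_mulr | apply: dvdp_mull].
  + by rewrite mul1r (negPf na).
- have [b'|nb'] := boolP (f %| xinv g12); rewrite ?orbT ?orbF.
    have [] := at_f 0 1.
    + exact: dvdp_mulr.
    + by rewrite !mul0r mulr0 !add0r mul1r dvdp_mulr.
    + by rewrite !mul0r add0r mul1r (negPf nd).
  apply/negP => na; have [] := at_f (xinv g12 * g22) (- (xinv g11 * g11 + xinv g12 * g12)).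
  + exact: dvdp_mulr.
  + set r := _ + _ * _; have -> : r = 0 by rewrite /r; ring.
    exact: dvdp0.
  + by rewrite !irredp_dvdpM // (negPf nb') (negPf nd) (negPf na).
- apply/negP => /andP[na a']; have [] := at_f g22 (- g12).
  + have -> : g22 * g12 + - g12 * g22 = 0 by ring.
    by rewrite mulr0 dvdp0.
  + have -> : g22 * g12 + - g12 * g22 = 0 by ring.
    by rewrite mulr0 addr0; apply: dvdp_mulr.
  + by rewrite irredp_dvdpM // (negPf nd) (negPf na).
Qed.

Lemma no_obstruction_LCD_modp :
  (forall f, irreducible_poly f -> f %| N -> ~~ obstruction_at f) -> LCD_modp g11 g12 g22.
Proof.
move=> no_obs r1 r2 dual2 dual1; set s := r1 * g12 + r2 * g22 in dual2 dual1 *.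
suff at_f f : irreducible_poly f -> f %| N -> (f %| r1 * g11) && (f %| s).
  by split; apply/(separable_dvdpP sepN) => f irf /(at_f f irf) /andP[].
move=> irf fN; have := no_obs f irf fN; rewrite /obstruction_at /obstruction.
have {}dual2 := dvdp_trans fN dual2; have {}dual1 := dvdp_trans fN dual1.
rewrite irredp_dvdpM // in dual2.
have [d|nd] := boolP (f %| g22); have [d'|nd'] := boolP (f %| xinv g22) => /=.
- rewrite negb_and negbK => /orP[/andP[a b]|ne].
    by rewrite dvdp_mull //= /s dvdp_add // dvdp_mull.
  have : f %| r1 * (g11 * xinv g11 + g12 * xinv g12) + r2 * g22 * xinv g12.
    by have <- : xinv g11 * (r1 * g11) + xinv g12 * s =
      r1 * (g11 * xinv g11 + g12 * xinv g12) + r2 * g22 * xinv g12 by rewrite /s; ring.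
  rewrite dvdp_addl; last by apply: dvdp_mulr; apply: dvdp_mull.
  rewrite irredp_dvdpM // (negPf ne) orbF => r1f.
  by rewrite dvdp_mulr //= /s; apply: dvdp_add; [apply: dvdp_mulr | apply: dvdp_mull].
- rewrite (negPf nd') /= in dual2; rewrite dual2 andbT => nobs.
  move: dual1; rewrite dvdp_addl; last exact: dvdp_mull.
  rewrite [_ %| xinv g11 * _]irredp_dvdpM // => /orP[a'|//].
  have [a|na] := boolP (f %| g11); first by rewrite dvdp_mull.
  have nb : ~~ (f %| g12) by apply: contra nobs => b; rewrite b na a'.
  move: dual2; rewrite /s dvdp_addl; last exact: dvdp_mull.
  by rewrite irredp_dvdpM // (negPf nb) orbF; apply: dvdp_mulr.
- rewrite negb_or negbK => /andP[a nb']; rewrite dvdp_mull //=.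
  move: dual1; rewrite dvdp_addr; last by apply: dvdp_mull; apply: dvdp_mull.
  by rewrite irredp_dvdpM // (negPf nb').
- rewrite (negPf nd') /= in dual2; rewrite dual2 andbT => nobs.
  move: dual1; rewrite dvdp_addl; last exact: dvdp_mull.
  rewrite [_ %| xinv g11 * _]irredp_dvdpM // => /orP[a'|//].
  by rewrite dvdp_mull //; apply: contraNT nobs => na; rewrite na a'.
Qed.

Lemma LCD_modp_local : LCD_modp g11 g12 g22 <->
  forall f, irreducible_poly f -> f %| N -> ~~ obstruction_at f.
Proof. by split; [apply: LCD_modp_no_obstruction | apply: no_obstruction_LCD_modp]. Qed.

End Obstruction.

Lemma coprimep_X_xm1 : coprimep 'X N.
Proof.
apply/Bezout_coprimepP; exists ('X^(m.-1), -1); rewrite /= -exprSr prednK //.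
by rewrite mulN1r /xm1 opprB addrC subrK eqpxx.
Qed.

Lemma irredp_dvdp_XnM f k r : f %| N -> (f %| 'X^k * r) = (f %| r).
Proof.
move=> fN; apply: Gauss_dvdpr; rewrite coprimep_sym.
by apply: coprimep_dvdl fN _; apply: coprimep_expl; exact: coprimep_X_xm1.
Qed.

Lemma recip_dvdp_xinv f p : f %| N -> (size p <= m.+1)%N ->
  (f %| recip p) = (f %| xinv p).
Proof.
move=> fN sp; rewrite -(irredp_dvdp_XnM (m.+1 - size p)) // -transp_recip //.
exact: eqmodp_dvdp fN (transp_eqmodp m_gt0 sp).
Qed.

(* Up to a unit, the reciprocal f^* of an irreducible factor f of x^m - 1. *)
Definition recip_factor f := gcdp N (xinv f).

Section RecipFactor.
Variable f : {poly F}.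
Hypotheses (irf : irreducible_poly f) (fN : f %| N).

Lemma dvdp_recip_factor X : (recip_factor f %| X) = (f %| xinv X).
Proof.
apply/idP/idP => [f'X|/dvdpP[w Dw]].
  have [u Du] := Bezoutp N (xinv f).
  move: f'X; rewrite /recip_factor -(eqp_dvdl _ Du) => /(dvdp_comp_poly 'X^(m.-1)).
  apply: dvdp_trans; rewrite comp_polyD !comp_polyM.
  apply: dvdp_add; apply: dvdp_mull; first exact: dvdp_trans fN (xm1_dvdp_xinv (dvdpp N)).
  by rewrite (eqmodp_dvdp fN (xinvK m_gt0 f)).
have dX : recip_factor f %| xinv (xinv X) by rewrite Dw comp_polyM dvdp_mull // dvdp_gcdr.
rewrite -(eqmodp_dvdp (dvdp_gcdl _ _) (xinvK m_gt0 X)) //.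
Qed.

Lemma recip_factor_xinv X : (recip_factor f %| xinv X) = (f %| X).
Proof. by rewrite dvdp_recip_factor (eqmodp_dvdp fN (xinvK m_gt0 X)). Qed.

Lemma recip_factor_dvdp : recip_factor f %| N.
Proof. exact: dvdp_gcdl. Qed.

Lemma irredp_recip_factor : irreducible_poly (recip_factor f).
Proof.
apply: prime_irredp => [|u v]; last by rewrite !dvdp_recip_factor comp_polyM irredp_dvdpM.
have f'0 : recip_factor f != 0 by rewrite gcdp_eq0 negb_and xm1_neq0.
have : ~~ (recip_factor f %| 1).
  by rewrite -polyC1 -(comp_polyC _ 'X^(m.-1)) recip_factor_xinv polyC1 irredp_ndvdp1.
by rewrite dvdp1 ltn_neqAle eq_sym => ->; rewrite size_poly_gt0.
Qed.

End RecipFactor.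

Lemma self_recipP X : X %| N ->
  self_recip X <-> forall f, irreducible_poly f -> f %| N -> (f %| X) = (f %| xinv X).
Proof.
move=> XN; have X0 := dvdp_xm1_neq0 m_gt0 XN; have sX := size_dvdp_xm1 m_gt0 XN.
split=> [[c Dc] f irf fN|recipX].
  have c0 : c != 0 by apply: contraNneq (recip_neq0 X0) => c0; rewrite Dc c0 scale0r.
  by rewrite -recip_dvdp_xinv // Dc dvdpZr.
have /dvdpP[w Dw] : X %| recip X.
  apply: (separable_dvdp sepN XN) => f irf fX.
  have fN := dvdp_trans fX XN.
  by rewrite recip_dvdp_xinv // -recipX.
have w0 : w != 0 by apply: contraNneq (recip_neq0 X0) => w0; rewrite Dw w0 mul0r.
have /eqP sw : size w == 1%N.
  have : (size (recip X) <= size X)%N by apply: size_poly.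
  rewrite Dw size_mul //; move: (size_poly_gt0 w) (size_poly_gt0 X); rewrite w0 X0.
  by set a := size w; set b := size X; lia.
by exists w`_0; rewrite Dw {1}(size1_polyC (eq_leq sw)) mul_polyC.
Qed.

(* Conditions (I)-(IV) at one irreducible factor, with the argument convention
   of [obstruction]: d && ~~ a stands for f %| g22' and r for f %| r22. *)
Definition local_conditions (a b d a' b' d' e : bool) :=
  let r := (d && ~~ a) && (d' && ~~ a') in
  [&& (a && d) == (a' && d'), (~~ a && ~~ d) == (~~ a' && ~~ d'),
      ~~ ((d && ~~ a) && ~~ r && b) & ~~ (r && e)].

Lemma no_obstruction_pairE a b d a' b' d' e :
  a && d ==> b -> a' && d' ==> b' -> a && b ==> e -> a' && b' ==> e ->
  ~~ obstruction a b d a' b' d' e && ~~ obstruction a' b' d' a b d e =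
  local_conditions a b d a' b' d' e && local_conditions a' b' d' a b d e.
Proof. by case: a b d a' b' d' e => [] [] [] [] [] [] []. Qed.

Section Conditions.
Variables g11 g12 g22 : {poly F}.
Hypotheses (g11N : g11 %| N) (g22N : g22 %| N) (size_g12 : (size g12 < size g22)%N).
Hypothesis g12_dvdp : g11 * g22 %| N * g12.

Let g := gcdp g11 g22.
Let g22' := g22 %/ g.
Let l := N %/ lcmp g11 g22.
Let r22 := gcdp g22' (recip g22').
Let t22 := g22' %/ r22.
Let e := g11 * xinv g11 + g12 * xinv g12.

Let g22E : g22 = g22' * g.
Proof. by rewrite divpK // dvdp_gcdr. Qed.

Lemma g22'_dvdp : g22' %| N.
Proof. by apply: dvdp_trans g22N; rewrite g22E dvdp_mulr. Qed.

Lemma dvdp_g22' f : irreducible_poly f -> f %| N -> (f %| g22') = (f %| g22) && ~~ (f %| g11).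
Proof.
move=> irf fN; apply/idP/idP => [fg22'|/andP[]].
  have fg22 : f %| g22 by rewrite g22E dvdp_mulr.
  rewrite fg22 /=; apply/negP => fg11.
  have g22'gN : g22' * g %| N by rewrite -g22E.
  by move: (irredp_dvdp_cofactor irf g22'gN fg22'); rewrite dvdp_gcd fg11 fg22.
by rewrite g22E irredp_dvdpM // dvdp_gcd => /orP[-> // | /andP[->]].
Qed.

Let g11_neq0 : g11 != 0 := dvdp_xm1_neq0 m_gt0 g11N.

Lemma lcmpE : lcmp g11 g22 = g11 * g22'.
Proof. by rewrite /lcmp -/g g22E mulrA mulpK // gcdp_eq0 negb_and g11_neq0. Qed.

Lemma lcmp_dvdp : lcmp g11 g22 %| N.
Proof.
rewrite lcmpE Gauss_dvdp ?g11N ?g22'_dvdp //.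
apply/(coprimep_irredP _ g11_neq0) => f irf fg11.
by rewrite dvdp_g22' ?fg11 ?andbF // (dvdp_trans fg11).
Qed.

Let NE : N = l * lcmp g11 g22.
Proof. by rewrite divpK // lcmp_dvdp. Qed.

Lemma l_dvdp : l %| N.
Proof. by rewrite {1}NE dvdp_mulr. Qed.

Lemma dvdp_lcmp f : irreducible_poly f -> f %| N ->
  (f %| lcmp g11 g22) = (f %| g11) || (f %| g22).
Proof.
move=> irf fN; rewrite lcmpE irredp_dvdpM // dvdp_g22' //.
by case: (f %| g11); case: (f %| g22).
Qed.

Lemma dvdp_l f : irreducible_poly f -> f %| N -> (f %| l) = ~~ (f %| g11) && ~~ (f %| g22).
Proof.
move=> irf fN; rewrite -negb_or -dvdp_lcmp //; apply/idP/idP => [fl|nflcm].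
  by rewrite (irredp_dvdp_cofactor irf _ fl) // -NE.
by move: fN; rewrite {1}NE irredp_dvdpM // (negPf nflcm) orbF.
Qed.

Lemma dvdp_r22 f : f %| N -> (f %| r22) = (f %| g22') && (f %| xinv g22').
Proof.
by move=> fN; rewrite dvdp_gcd recip_dvdp_xinv // size_dvdp_xm1 // g22'_dvdp.
Qed.

Lemma dvdp_t22 f : irreducible_poly f -> f %| N -> (f %| t22) = (f %| g22') && ~~ (f %| r22).
Proof.
move=> irf fN; have g22'E : g22' = t22 * r22 by rewrite divpK // dvdp_gcdl.
have t22r22N : t22 * r22 %| N by rewrite -g22'E g22'_dvdp.
apply/idP/idP => [ft22|/andP[]]; last by rewrite g22'E irredp_dvdpM // => /orP[// | ->].
by rewrite (irredp_dvdp_cofactor irf t22r22N ft22) g22'E dvdp_mulr.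
Qed.

Lemma dvdp_g12 f : irreducible_poly f -> f %| N -> f %| g11 -> f %| g22 -> f %| g12.
Proof.
move=> irf fN fg11 fg22; have NE' : N = f * (N %/ f) by rewrite mulrC divpK.
have : f * f %| f * (N %/ f * g12).
  by rewrite mulrA -NE'; apply: dvdp_trans g12_dvdp; apply: dvdp_mul.
rewrite dvdp_mul2l ?irredp_neq0 // irredp_dvdpM // => /orP[fN'|//].
by case/negP: (irredp_sq irf); rewrite [X in _ %| X]NE' dvdp_mul.
Qed.

Lemma recip_factor_e f : irreducible_poly f -> f %| N -> (recip_factor f %| e) = (f %| e).
Proof.
move=> irf fN; rewrite dvdp_recip_factor //; apply: eqmodp_dvdp fN _.
rewrite /e comp_polyD !comp_polyM; apply: eqmodpD; rewrite mulrC;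
  by apply: eqmodpM; rewrite ?eqmodpxx ?xinvK.
Qed.

Definition conditions_at f := local_conditions (f %| g11) (f %| g12) (f %| g22)
  (f %| xinv g11) (f %| xinv g12) (f %| xinv g22) (f %| e).

Section Pointwise.
Variable f : {poly F}.
Hypotheses (irf : irreducible_poly f) (fN : f %| N).
Let irf' := irredp_recip_factor irf fN.
Let fN' := recip_factor_dvdp f.

Lemma obstruction_at_recip_factor :
  obstruction_at g11 g12 g22 (recip_factor f) =
  obstruction (f %| xinv g11) (f %| xinv g12) (f %| xinv g22) (f %| g11) (f %| g12)
    (f %| g22) (f %| e).
Proof.
by rewrite /obstruction_at -/e recip_factor_e // !recip_factor_xinv // !dvdp_recip_factor.
Qed.

Lemma conditions_at_recip_factor :
  conditions_at (recip_factor f) =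
  local_conditions (f %| xinv g11) (f %| xinv g12) (f %| xinv g22) (f %| g11) (f %| g12)
    (f %| g22) (f %| e).
Proof. by rewrite /conditions_at recip_factor_e // !recip_factor_xinv // !dvdp_recip_factor. Qed.

Lemma no_obstruction_pair_conditions :
  ~~ obstruction_at g11 g12 g22 f && ~~ obstruction_at g11 g12 g22 (recip_factor f) =
  conditions_at f && conditions_at (recip_factor f).
Proof.
rewrite obstruction_at_recip_factor conditions_at_recip_factor.
apply: no_obstruction_pairE; apply/implyP => /andP[].
- exact: dvdp_g12.
- rewrite -!dvdp_recip_factor // => *.
  by apply: (dvdp_g12 (irredp_recip_factor irf fN) (recip_factor_dvdp f)).
- by move=> *; rewrite /e dvdp_add ?dvdp_mulr.
- by move=> *; rewrite /e dvdp_add ?dvdp_mull.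
Qed.

Lemma dvdp_xinv_g : (f %| xinv g) = (f %| xinv g11) && (f %| xinv g22).
Proof. by rewrite -[LHS]dvdp_recip_factor // dvdp_gcd !dvdp_recip_factor. Qed.

Lemma dvdp_xinv_l : (f %| xinv l) = ~~ (f %| xinv g11) && ~~ (f %| xinv g22).
Proof. by rewrite -[LHS]dvdp_recip_factor // dvdp_l // !dvdp_recip_factor. Qed.

Lemma dvdp_xinv_g22' : (f %| xinv g22') = (f %| xinv g22) && ~~ (f %| xinv g11).
Proof. by rewrite -[LHS]dvdp_recip_factor // dvdp_g22' // !dvdp_recip_factor. Qed.

Lemma dvdp_r22E : (f %| r22) =
  ((f %| g22) && ~~ (f %| g11)) && ((f %| xinv g22) && ~~ (f %| xinv g11)).
Proof. by rewrite dvdp_r22 // dvdp_g22' // dvdp_xinv_g22'. Qed.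

Lemma dvdp_t22E : (f %| t22) = ((f %| g22) && ~~ (f %| g11)) && ~~ (f %| r22).
Proof. by rewrite dvdp_t22 // dvdp_g22'. Qed.

Lemma dvdp_e_transp : (f %| g11 * transp m g11 + g12 * transp m g12) = (f %| e).
Proof.
apply: eqmodp_dvdp fN _; apply: eqmodpD; apply: eqmodpM; rewrite ?eqmodpxx //;
  apply: transp_eqmodp => //; first exact: size_dvdp_xm1.
by rewrite ltnW // (leq_trans size_g12) // size_dvdp_xm1.
Qed.

End Pointwise.

Lemma no_obstruction_conditions :
  (forall f, irreducible_poly f -> f %| N -> ~~ obstruction_at g11 g12 g22 f) <->
  (forall f, irreducible_poly f -> f %| N -> conditions_at f).
Proof.
split=> H f irf fN; have := no_obstruction_pair_conditions irf fN;
  have irf' := irredp_recip_factor irf fN; have fN' := recip_factor_dvdp f.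
  by rewrite !H // => /esym/andP[].
by rewrite !H // => /andP[].
Qed.

Lemma g_dvdp : g %| N.
Proof. exact: dvdp_trans (dvdp_gcdl _ _) g11N. Qed.

Lemma r22_dvdp : r22 %| N.
Proof. exact: dvdp_trans (dvdp_gcdl _ _) g22'_dvdp. Qed.

Lemma t22_dvdp : t22 %| N.
Proof.
have g22'E : g22' = t22 * r22 by rewrite divpK // dvdp_gcdl.
by apply: dvdp_trans g22'_dvdp; rewrite g22'E dvdp_mulr.
Qed.

Lemma conditions_local :
  [/\ self_recip g, self_recip l, coprimep t22 g12 &
      coprimep r22 (g11 * transp m g11 + g12 * transp m g12)] <->
  forall f, irreducible_poly f -> f %| N -> conditions_at f.
Proof.
have srP := self_recipP; have cpP := coprimep_localP.
split=> [[/(srP _ g_dvdp) Hg /(srP _ l_dvdp) Hl /(cpP _ _ t22_dvdp) Ht /(cpP _ _ r22_dvdp) Hr]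
        | H].
  move=> f irf fN; apply/and4P; split.
  - by move: (Hg f irf fN); rewrite dvdp_gcd dvdp_xinv_g // => ->.
  - by move: (Hl f irf fN); rewrite dvdp_l // dvdp_xinv_l // => ->.
  - by move: (Ht f irf fN); rewrite dvdp_t22E // dvdp_r22E.
  - by move: (Hr f irf fN); rewrite dvdp_r22E // dvdp_e_transp.
split; [apply/(srP _ g_dvdp) | apply/(srP _ l_dvdp) |
       apply/(cpP _ _ t22_dvdp) | apply/(cpP _ _ r22_dvdp)] => f irf fN;
  have /and4P[Hg Hl Ht Hr] := H f irf fN.
- by rewrite dvdp_gcd dvdp_xinv_g //; apply/eqP.
- by rewrite dvdp_l // dvdp_xinv_l //; apply/eqP.
- by rewrite dvdp_t22E // dvdp_r22E.
- by rewrite dvdp_r22E // dvdp_e_transp.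
Qed.

End Conditions.

End Localisation.

End CyclicCode.

Lemma coprime_card_natr_neq0 (F : finFieldType) m : coprime #|F| m -> (m%:R : F) != 0.
Proof.
move=> cFm; apply/eqP => m0.
have cF0 : (#|F|%:R : F) = 0 by rewrite -zmodXgE -cardsT expg_cardG ?inE.
have F_gt0 : (0 < #|F|)%N by apply/card_gt0P; exists 0.
have [a _ /dvdnP[k]] := Bezoutl m F_gt0.
rewrite (eqP cFm) => /(congr1 (GRing.natmul (1 : F))).
by rewrite natrD natrM natrM m0 cF0 !mulr0 addr0; apply/eqP; rewrite oner_neq0.
Qed.

Theorem theorem3p1 (F : finFieldType) (m : nat) (g11 g12 g22 : {poly F}) :
  (0 < m)%N -> coprime #|F| m ->
  g11 %| xm1 F m -> g22 %| xm1 F m -> (size g12 < size g22)%N ->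
  g11 * g22 %| xm1 F m * g12 ->
  let g := gcdp g11 g22 in
  let l := xm1 F m %/ lcmp g11 g22 in
  let g11' := g11 %/ g in
  let g22' := g22 %/ g in
  let r11 := gcdp g11' (recip g11') in
  let t11 := g11' %/ r11 in
  let r22 := gcdp g22' (recip g22') in
  let t22 := g22' %/ r22 in
  euclid_LCD m g11 g12 g22 <->
  [/\ self_recip g, self_recip l, coprimep t22 g12 &
      coprimep r22 (g11 * transp m g11 + g12 * transp m g12)].
Proof.
move=> m_gt0 /coprime_card_natr_neq0 m_neq0 g11N g22N size_g12 g12_dvdp *.
rewrite (euclid_LCD_modp m_gt0) (LCD_modp_local m_neq0).
rewrite (no_obstruction_conditions m_neq0 g12_dvdp).
by rewrite (conditions_local m_neq0 g11N g22N size_g12).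
Qed.
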